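(* Let $n\ge n_0\ge0$ be integers, let $u=(u_k)_{k\ge0}$ be a sequence of positive reals that is $\alpha$-moderate from $n_0$ onwards, and let $(w_k)_{k\ge0}\subset\mathbb{R}^d$, $w^*\in\mathbb{R}^d$ satisfy $\|w_k-w^*\|\le u_k$ for all $n_0\le k\le n$. Then $$\|T_{n+1}\|\le\frac{2e^{q_1/2}}{q_1}\,C_U\,\|W_1W_2^{-1}\|\,C_\theta\,\frac{\alpha_n}{\beta_n}u_n .$$
   Context: $1>\alpha>\beta>0$, $\alpha_n=(n+1)^{-\alpha}$, $\beta_n=(n+1)^{-\beta}$. $X_1\in\mathbb{R}^{d\times d}$ with $X_1+X_1^\top$ positive definite, $q_1=\lambda_{\min}(X_1+X_1^\top)/4$; $W_1\in\mathbb{R}^{d\times d}$, $W_2\in\mathbb{R}^{d\times d}$ invertible. $C_\theta$ is the constant $\max\{1,\sqrt{\max_{0\le\ell_1\le\ell_2\le K}\prod_{\ell=\ell_1}^{\ell_2}e^{\alpha_\ell(\mu+2q_1)}}\}$ with $\mu=-\lambda_{\min}(X_1+X_1^\top)+\lambda_{\max}(X_1^\top X_1)$ and $K=\lceil(\lambda_{\max}(X_1^\top X_1)/(\lambda_{\min}(X_1+X_1^\top)-2q_1))^{1/\alpha}\rceil$. $C_U=\|X_1\|+2(\alpha-\beta)(1+\|X_1\|)$. $T_{n+1}=\sum_{k=n_0+1}^{n}\Big(\prod_{j=k+1}^{n}(I-\alpha_jX_1)\Big)\Big[\frac{\alpha_k}{\beta_k}I-\frac{\alpha_{k-1}}{\beta_{k-1}}(I-\alpha_kX_1)\Big]W_1W_2^{-1}(w_k-w^*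 )$ (empty products are $I$). A positive sequence $u$ is $\alpha$-moderate from $k_0$ onwards if $\frac{u_k}{u_{k+1}}\le\frac{\alpha_{k+1}}{\alpha_k}\frac{\beta_k}{\beta_{k+1}}e^{(q_1/2)\alpha_{k+1}}$ for all $k\ge k_0$. Norms are spectral/Euclidean. *)

(* Matrices in R^{d x d} are represented as
   functions nat -> nat -> R of which only the entries with indices < d matter;
   vectors in R^d as functions nat -> R (only coordinates < d matter). *)
From Stdlib Require Import Reals Lra Lia ClassicalEpsilon.
Open Scope R_scope.

Definition Vec := nat -> R.
Definition Mat := nat -> nat -> R.

Fixpoint rsum (n : nat) (f : nat -> R) : R :=
  match n with O => 0 | S m => rsum m f + f m end.

Fixpoint rprod (n : nat) (f : nat -> R) : R :=
  match n with O => 1 | S m => rprod m f * f m end.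

Definition rsum_range (a b : nat) (f : nat -> R) : R := rsum (S b - a) (fun t => f (a + t)%nat).
Definition rprod_range (a b : nat) (f : nat -> R) : R := rprod (S b - a) (fun t => f (a + t)%nat).

Definition idm : Mat := fun i j => if Nat.eqb i j then 1 else 0.
Definition madd (A B : Mat) : Mat := fun i j => A i j + B i j.
Definition mscale (c : R) (A : Mat) : Mat := fun i j => c * A i j.
Definition mtr (A : Mat) : Mat := fun i j => A j i.
Definition mmul (d : nat) (A B : Mat) : Mat := fun i j => rsum d (fun k => A i k * B k j).
Definition mvec (d : nat) (A : Mat) (v : Vec) : Vec := fun i => rsum d (fun k => A i k * v k).
Definition vsub (v w : Vec) : Vec := fun i => v i - w i.

Definition vnorm (d : nat) (v : Vec) : R := sqrt (rsum d (fun i => v i ^ 2)).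

Definition opnorm (d : nat) (A : Mat) : R :=
  epsilon (inhabits 0)
    (fun s => is_lub (fun r => exists v : Vec, vnorm d v <= 1 /\ r = vnorm d (mvec d A v)) s).

Definition is_eigenvalue (d : nat) (A : Mat) (l : R) : Prop :=
  exists v : Vec, (exists i, (i < d)%nat /\ v i <> 0) /\
    forall i, (i < d)%nat -> mvec d A v i = l * v i.

Definition lambda_min (d : nat) (A : Mat) : R :=
  epsilon (inhabits 0)
    (fun l => is_eigenvalue d A l /\ forall m, is_eigenvalue d A m -> l <= m).
Definition lambda_max (d : nat) (A : Mat) : R :=
  epsilon (inhabits 0)
    (fun l => is_eigenvalue d A l /\ forall m, is_eigenvalue d A m -> m <= l).

Definition pos_def (d : nat) (S : Mat) : Prop :=
  forall v : Vec, (exists i, (i < d)%nat /\ v i <> 0) ->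
    0 < rsum d (fun i => v i * mvec d S v i).

(* step sizes alpha_n = (n+1)^{-alpha}, beta_n = (n+1)^{-beta} *)
Definition step (a : R) (n : nat) : R := Rpower (INR n + 1) (- a).

Definition q1 (d : nat) (X1 : Mat) : R := lambda_min d (madd X1 (mtr X1)) / 4.
Definition mu (d : nat) (X1 : Mat) : R :=
  - lambda_min d (madd X1 (mtr X1)) + lambda_max d (mmul d (mtr X1) X1).

(* ceiling of a real number *)
Definition ceil_nat (x : R) : nat := Z.to_nat (1 - up (- x)).

Definition Kc (d : nat) (alpha : R) (X1 : Mat) : nat :=
  ceil_nat (Rpower (lambda_max d (mmul d (mtr X1) X1) /
                    (lambda_min d (madd X1 (mtr X1)) - 2 * q1 d X1)) (1 / alpha)).

(* max over 0 <= l1 <= l2 <= K of F l1 l2 *)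
Fixpoint max_l1 (l2 : nat) (F : nat -> nat -> R) (m : nat) : R :=
  match m with O => F O l2 | S m' => Rmax (max_l1 l2 F m') (F (S m') l2) end.
Fixpoint max_tri (K : nat) (F : nat -> nat -> R) : R :=
  match K with O => max_l1 O F O | S K' => Rmax (max_tri K' F) (max_l1 (S K') F (S K')) end.

Definition C_theta (d : nat) (alpha : R) (X1 : Mat) : R :=
  Rmax 1 (sqrt (max_tri (Kc d alpha X1)
     (fun l1 l2 => rprod_range l1 l2
         (fun l => exp (step alpha l * (mu d X1 + 2 * q1 d X1)))))).

Definition C_U (d : nat) (alpha beta : R) (X1 : Mat) : R :=
  opnorm d X1 + 2 * (alpha - beta) * (1 + opnorm d X1).

(* ordered matrix product A_a * A_{a+1} * ... * A_b (identity if b < a) *)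
Fixpoint mprod (d : nat) (f : nat -> Mat) (a m : nat) : Mat :=
  match m with O => idm | S m' => mmul d (mprod d f a m') (f (a + m')%nat) end.
Definition mprod_range (d : nat) (f : nat -> Mat) (a b : nat) : Mat :=
  mprod d f a (S b - a).

Definition Ifac (d : nat) (alpha : R) (X1 : Mat) (j : nat) : Mat :=
  madd idm (mscale (- step alpha j) X1).

(* T_{n+1} where M = W1 W2^{-1} *)
Definition T_next (d : nat) (alpha beta : R) (X1 M : Mat) (w : nat -> Vec) (wstar : Vec)
  (n0 n : nat) : Vec :=
  fun i => rsum_range (S n0) n (fun k =>
    mvec d
      (mmul d (mprod_range d (Ifac d alpha X1) (S k) n)
        (mmul d
          (madd (mscale (step alpha k / step beta k) idm)
                (mscale (- (step alpha (k - 1) / step beta (k - 1))) (Ifac d alpha X1 k)))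
          M))
      (vsub (w k) wstar) i).

Definition alpha_moderate (alpha beta : R) (q : R) (u : nat -> R) (k0 : nat) : Prop :=
  forall k : nat, (k0 <= k)%nat ->
    u k / u (S k) <= (step alpha (S k) / step alpha k) * (step beta k / step beta (S k))
                       * exp ((q / 2) * step alpha (S k)).

From Stdlib Require Import Reals Lra Lia ClassicalEpsilon.
From mathcomp Require ssreflect ssrfun ssrbool eqtype ssrnat fintype bigop ssralg matrix Rstruct.
Open Scope R_scope.
Set Bullet Behavior "Strict Subproofs".

(** Write [r_k = alpha_k / beta_k].  Each factor [I - alpha_j X1] has norm at most
    [exp (- q1 alpha_j)], except for the finitely many [j < K] where the quadratic term
    [alpha_j^2 |X1^T X1|] is not yet dominated; the products of the excess factors over
    windows are bounded by [C_theta].  Since [r_k] varies slowly, the bracket in the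
    summand for index [k] has norm at most [C_U alpha_k r_k], and moderateness of [u]
    gives [u_k r_k <= exp ((q1/2) sum_(k<j<=n) alpha_j) u_n r_n].  Hence [|T_(n+1)|] is
    at most [C u_n r_n sum_k alpha_k exp (- (q1/2) sum_(k<j<=n) alpha_j)], and the last
    sum is a Riemann sum of [exp (- (q1/2) t)] with mesh at most [1], bounded by
    [2 exp (q1/2) / q1]. *)

Lemma rsum_ext n f g : (forall i, (i < n)%nat -> f i = g i) -> rsum n f = rsum n g.
Proof. induction n; intros H; simpl; auto. rewrite IHn, H by (auto; lia). reflexivity. Qed.

Lemma rsum_plus n f g : rsum n (fun i => f i + g i) = rsum n f + rsum n g.
Proof. induction n; simpl; [lra | rewrite IHn; lra]. Qed.

Lemma rsum_scal_l n c f : rsum n (fun i => c * f i) = c * rsum n f.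
Proof. induction n; simpl; [lra | rewrite IHn; lra]. Qed.

Lemma rsum_scal_r n c f : rsum n (fun i => f i * c) = rsum n f * c.
Proof. induction n; simpl; [lra | rewrite IHn; lra]. Qed.

Lemma rsum_0 n : rsum n (fun _ => 0) = 0.
Proof. induction n; simpl; [lra | rewrite IHn; lra]. Qed.

Lemma rsum_le_compat n f g :
  (forall i, (i < n)%nat -> f i <= g i) -> rsum n f <= rsum n g.
Proof.
  induction n; simpl; intros H; [lra |].
  assert (f n <= g n) by (apply H; lia).
  assert (rsum n f <= rsum n g) by (apply IHn; intros; apply H; lia).
  lra.
Qed.

Lemma rsum_nonneg n f : (forall i, (i < n)%nat -> 0 <= f i) -> 0 <= rsum n f.
Proof. intros H. rewrite <- (rsum_0 n). now apply rsum_le_compat. Qed.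

Lemma rsum_comm n m (f : nat -> nat -> R) :
  rsum n (fun i => rsum m (f i)) = rsum m (fun j => rsum n (fun i => f i j)).
Proof.
  induction n; simpl.
  - now rewrite rsum_0.
  - rewrite IHn, <- rsum_plus. reflexivity.
Qed.

Lemma rsum_shift n f : rsum (S n) f = f O + rsum n (fun t => f (S t)).
Proof. induction n; simpl in *; [lra | rewrite IHn; lra]. Qed.

Lemma rsum_telescope (E : nat -> R) m N :
  rsum N (fun t => E (S (m + t)) - E (m + t)%nat) = E (m + N)%nat - E m.
Proof.
  induction N; simpl.
  - rewrite Nat.add_0_r; ring.
  - rewrite IHN, Nat.add_succ_r; ring.
Qed.

Lemma rsum_truncate N a K f :
  rsum N (fun t => if Nat.ltb (a + t) K then f (a + t)%nat else 0)
  = rsum (Nat.min N (K - a)) (fun t => f (a + t)%nat).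
Proof.
  induction N; [reflexivity |].
  cbn [rsum]. rewrite IHN. destruct (Nat.ltb_spec (a + N) K).
  - replace (Nat.min (S N) (K - a)) with (S N) by lia.
    replace (Nat.min N (K - a)) with N by lia. reflexivity.
  - replace (Nat.min (S N) (K - a)) with (Nat.min N (K - a)) by lia. ring.
Qed.

Lemma rprod_nonneg n f : (forall i, 0 <= f i) -> 0 <= rprod n f.
Proof. intros H. induction n; simpl; [lra | now apply Rmult_le_pos]. Qed.

Lemma rprod_exp n g : rprod n (fun t => exp (g t)) = exp (rsum n g).
Proof. induction n; simpl; [now rewrite exp_0 | now rewrite IHn, exp_plus]. Qed.

(** * Euclidean geometry of [R^d] *)

Definition dot (d : nat) (v w : Vec) : R := rsum d (fun i => v i * w i).
Definition nsq (d : nat) (v : Vec) : R := rsum d (fun i => v i ^ 2).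

Lemma dot_sym d v w : dot d v w = dot d w v.
Proof. apply rsum_ext; intros; ring. Qed.

Lemma dot_ext d v v' w w' :
  (forall i, (i < d)%nat -> v i = v' i) -> (forall i, (i < d)%nat -> w i = w' i) ->
  dot d v w = dot d v' w'.
Proof. intros H1 H2. apply rsum_ext. intros; now rewrite H1, H2. Qed.

Lemma dot_lin_r d x p q a b :
  dot d x (fun i => a * p i + b * q i) = a * dot d x p + b * dot d x q.
Proof. unfold dot. induction d; simpl; [ring | rewrite IHd; ring]. Qed.

Lemma dot_expand d x y p q t :
  dot d (fun i => x i - t * y i) (fun i => p i - t * q i)
  = dot d x p - t * dot d x q - t * dot d y p + t ^ 2 * dot d y q.
Proof. unfold dot. induction d; simpl; [ring | rewrite IHd; ring]. Qed.

Lemma nsq_dot d v : nsq d v = dot d v v.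
Proof. apply rsum_ext; intros; simpl; ring. Qed.

Lemma nsq_nonneg d v : 0 <= nsq d v.
Proof. apply rsum_nonneg. intros. apply pow2_ge_0. Qed.

Lemma nsq_scal d c v : nsq d (fun i => c * v i) = c ^ 2 * nsq d v.
Proof. unfold nsq. rewrite <- rsum_scal_l. apply rsum_ext; intros; ring. Qed.

Lemma nsq_eq0 d v : nsq d v = 0 -> forall i, (i < d)%nat -> v i = 0.
Proof.
  induction d; intros H i Hi; [lia |].
  change (nsq d v + v d ^ 2 = 0) in H.
  pose proof (nsq_nonneg d v). pose proof (pow2_ge_0 (v d)).
  destruct (Nat.eq_dec i d) as [-> | ]; [nra |].
  apply IHd; [lra | lia].
Qed.

Lemma nsq_pos d v : (exists i, (i < d)%nat /\ v i <> 0) -> 0 < nsq d v.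
Proof.
  intros [i [Hi Hv]]. destruct (nsq_nonneg d v) as [| H0]; auto.
  contradict Hv. now apply (nsq_eq0 d v).
Qed.

Lemma vnorm_nonneg d v : 0 <= vnorm d v.
Proof. apply sqrt_pos. Qed.

Lemma vnorm_sqr d v : vnorm d v ^ 2 = nsq d v.
Proof. apply pow2_sqrt, nsq_nonneg. Qed.

Lemma vnorm_ext d v w : (forall i, (i < d)%nat -> v i = w i) -> vnorm d v = vnorm d w.
Proof. intros H. unfold vnorm. f_equal. apply rsum_ext. intros; now rewrite H. Qed.

Lemma vnorm_le_of_nsq d v w c :
  0 <= c -> nsq d v <= c ^ 2 * nsq d w -> vnorm d v <= c * vnorm d w.
Proof.
  intros Hc H. unfold vnorm. rewrite <- (sqrt_pow2 c Hc), <- sqrt_mult.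
  - now apply sqrt_le_1_alt.
  - apply pow2_ge_0.
  - apply nsq_nonneg.
Qed.

Lemma discriminant_le A B C :
  0 <= C -> (forall t, 0 <= A - 2 * t * B + t ^ 2 * C) -> B ^ 2 <= A * C.
Proof.
  intros HC H. destruct HC as [HC | <-].
  - specialize (H (B / C)).
    replace (A - 2 * (B / C) * B + (B / C) ^ 2 * C) with ((A * C - B ^ 2) / C) in H
      by (field; lra).
    apply (Rmult_le_compat_r C) in H; [| lra].
    unfold Rdiv in H. rewrite Rmult_assoc, Rinv_l in H; lra.
  - destruct (Req_dec B 0) as [-> | HB]; [lra |].
    specialize (H ((A + 1) / (2 * B))).
    replace (2 * ((A + 1) / (2 * B)) * B) with (A + 1) in H by (field; auto). lra.
Qed.

Lemma cauchy_schwarz d v w : dot d v w ^ 2 <= nsq d v * nsq d w.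
Proof.
  apply discriminant_le; [apply nsq_nonneg |]. intros t.
  replace (nsq d v - 2 * t * dot d v w + t ^ 2 * nsq d w)
    with (dot d (fun i => v i - t * w i) (fun i => v i - t * w i))
    by (rewrite dot_expand, (dot_sym d w v), !nsq_dot; ring).
  rewrite <- nsq_dot. apply nsq_nonneg.
Qed.

Lemma dot_abs_le d v w : Rabs (dot d v w) <= vnorm d v * vnorm d w.
Proof.
  pose proof (cauchy_schwarz d v w).
  pose proof (vnorm_nonneg d v). pose proof (vnorm_nonneg d w).
  rewrite <- vnorm_sqr, <- (vnorm_sqr d w) in H.
  apply Rsqr_incr_0_var; [| nra]. rewrite <- Rsqr_abs. unfold Rsqr. nra.
Qed.

Lemma vnorm_triangle d v w : vnorm d (fun i => v i + w i) <= vnorm d v + vnorm d w.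
Proof.
  assert (E : nsq d (fun i => v i + w i) = nsq d v + 2 * dot d v w + nsq d w).
  { unfold nsq, dot. induction d; simpl in *; [ring | rewrite IHd; ring]. }
  rewrite <- (vnorm_sqr d v), <- (vnorm_sqr d w), <- (vnorm_sqr d (fun i => v i + w i)) in E.
  pose proof (vnorm_nonneg d v). pose proof (vnorm_nonneg d w).
  pose proof (vnorm_nonneg d (fun i => v i + w i)).
  pose proof (Rle_abs (dot d v w)). pose proof (dot_abs_le d v w).
  apply Rsqr_incr_0_var; unfold Rsqr; nra.
Qed.

Lemma vnorm_scal d c v : vnorm d (fun i => c * v i) = Rabs c * vnorm d v.
Proof.
  change (sqrt (nsq d (fun i => c * v i)) = Rabs c * sqrt (nsq d v)).
  rewrite nsq_scal, sqrt_mult by (apply pow2_ge_0 || apply nsq_nonneg).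
  now rewrite <- Rsqr_pow2, sqrt_Rsqr_abs.
Qed.

Lemma vnorm_lin d a b v w :
  vnorm d (fun i => a * v i + b * w i) <= Rabs a * vnorm d v + Rabs b * vnorm d w.
Proof.
  rewrite <- !vnorm_scal. apply (vnorm_triangle d (fun i => a * v i) (fun i => b * w i)).
Qed.

Lemma vnorm_rsum d N (g : nat -> Vec) :
  vnorm d (fun i => rsum N (fun t => g t i)) <= rsum N (fun t => vnorm d (g t)).
Proof.
  induction N; simpl.
  - unfold vnorm. rewrite (rsum_ext _ _ (fun _ => 0)) by (intros; simpl; ring).
    rewrite rsum_0, sqrt_0. lra.
  - eapply Rle_trans; [apply (vnorm_triangle d _ (g N)) | lra].
Qed.

(** * Matrices and the operator norm *)

Lemma mvec_ext d A v w i :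
  (forall k, (k < d)%nat -> v k = w k) -> mvec d A v i = mvec d A w i.
Proof. intros H. apply rsum_ext. intros; now rewrite H. Qed.

Lemma mvec_ext_mat d A B v i :
  (forall k, (k < d)%nat -> A i k = B i k) -> mvec d A v i = mvec d B v i.
Proof. intros H. apply rsum_ext. intros; now rewrite H. Qed.

Lemma mvec_idm d v i : (i < d)%nat -> mvec d idm v i = v i.
Proof.
  unfold mvec. induction d; intros Hi; [lia |]. simpl. unfold idm at 2.
  destruct (Nat.eqb_spec i d) as [-> | Hne].
  - rewrite (rsum_ext _ _ (fun _ => 0)), rsum_0; [ring |].
    intros k Hk. unfold idm. destruct (Nat.eqb_spec d k); [lia | ring].
  - rewrite IHd by lia. ring.
Qed.

Lemma mvec_mmul d A B v i : mvec d (mmul d A B) v i = mvec d A (mvec d B v) i.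
Proof.
  unfold mvec, mmul.
  transitivity (rsum d (fun k => rsum d (fun l => A i l * B l k * v k))).
  - apply rsum_ext; intros. rewrite <- rsum_scal_r. apply rsum_ext; intros; ring.
  - rewrite rsum_comm. apply rsum_ext; intros. rewrite <- rsum_scal_l.
    apply rsum_ext; intros; ring.
Qed.

Lemma mvec_madd d A B v i : mvec d (madd A B) v i = mvec d A v i + mvec d B v i.
Proof. unfold mvec, madd. rewrite <- rsum_plus. apply rsum_ext; intros; ring. Qed.

Lemma mvec_mscale d c A v i : mvec d (mscale c A) v i = c * mvec d A v i.
Proof. unfold mvec, mscale. rewrite <- rsum_scal_l. apply rsum_ext; intros; ring. Qed.

Lemma mvec_sub_scal d A t x y i :
  mvec d A (fun k => x k - t * y k) i = mvec d A x i - t * mvec d A y i.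
Proof. unfold mvec. induction d; simpl; [ring | rewrite IHd; ring]. Qed.

Lemma mvec_scal d A c v i : mvec d A (fun k => c * v k) i = c * mvec d A v i.
Proof. unfold mvec. rewrite <- rsum_scal_l. apply rsum_ext; intros; ring. Qed.

Lemma dot_mvec_mtr d A v w : dot d v (mvec d (mtr A) w) = dot d (mvec d A v) w.
Proof.
  unfold dot, mvec, mtr.
  transitivity (rsum d (fun i => rsum d (fun k => v i * A k i * w k))).
  - apply rsum_ext; intros. rewrite <- rsum_scal_l. apply rsum_ext; intros; ring.
  - rewrite rsum_comm. apply rsum_ext; intros. rewrite <- rsum_scal_r.
    apply rsum_ext; intros; ring.
Qed.

Definition frob2 (d : nat) (A : Mat) : R := rsum d (fun i => rsum d (fun k => A i k ^ 2)).

Lemma frob2_nonneg d A : 0 <= frob2 d A.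
Proof. apply rsum_nonneg; intros. apply rsum_nonneg; intros. apply pow2_ge_0. Qed.

Lemma nsq_mvec_le d A v : nsq d (mvec d A v) <= frob2 d A * nsq d v.
Proof.
  unfold frob2. rewrite <- rsum_scal_r. apply rsum_le_compat. intros i Hi.
  apply (cauchy_schwarz d (fun k => A i k) v).
Qed.

Lemma vnorm_mvec_frob d A v : vnorm d (mvec d A v) <= sqrt (frob2 d A) * vnorm d v.
Proof.
  apply vnorm_le_of_nsq; [apply sqrt_pos |].
  rewrite pow2_sqrt by apply frob2_nonneg. apply nsq_mvec_le.
Qed.

Lemma vnorm_zero d : vnorm d (fun _ => 0) = 0.
Proof.
  unfold vnorm. rewrite (rsum_ext _ _ (fun _ => 0)) by (intros; simpl; ring).
  now rewrite rsum_0, sqrt_0.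
Qed.

Definition opset (d : nat) (A : Mat) (r : R) : Prop :=
  exists v : Vec, vnorm d v <= 1 /\ r = vnorm d (mvec d A v).

Lemma opnorm_lub d A : is_lub (opset d A) (opnorm d A).
Proof.
  unfold opnorm. apply epsilon_spec.
  assert (Hc : {m : R | is_lub (opset d A) m}).
  { apply completeness.
    - exists (sqrt (frob2 d A)). intros r [v [Hv ->]].
      pose proof (vnorm_mvec_frob d A v). pose proof (sqrt_pos (frob2 d A)).
      pose proof (vnorm_nonneg d v). nra.
    - exists (vnorm d (mvec d A (fun _ => 0))). exists (fun _ => 0).
      rewrite vnorm_zero. split; [lra | reflexivity]. }
  destruct Hc as [m Hm]. now exists m.
Qed.

Lemma opnorm_nonneg d A : 0 <= opnorm d A.
Proof.
  apply (proj1 (opnorm_lub d A)). exists (fun _ => 0). rewrite vnorm_zero. split; [lra |].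
  rewrite (vnorm_ext _ _ (fun _ => 0)), vnorm_zero; [reflexivity |].
  intros. unfold mvec. rewrite (rsum_ext _ _ (fun _ => 0)), rsum_0; [reflexivity |].
  intros; ring.
Qed.

Lemma opnorm_bound d A v : vnorm d (mvec d A v) <= opnorm d A * vnorm d v.
Proof.
  pose proof (vnorm_nonneg d v) as [Hv | Hv].
  - set (c := / vnorm d v).
    assert (Hc : 0 < c) by (apply Rinv_0_lt_compat; lra).
    assert (Hu : vnorm d (fun k => c * v k) = 1)
      by (rewrite vnorm_scal, Rabs_pos_eq by lra; unfold c; field; lra).
    assert (Hle : vnorm d (mvec d A (fun k => c * v k)) <= opnorm d A)
      by (apply (proj1 (opnorm_lub d A)); exists (fun k => c * v k); split; [lra | reflexivity]).
    rewrite (vnorm_ext _ _ (fun i => c * mvec d A v i)) in Hle by (intros; apply mvec_scal).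
    rewrite vnorm_scal, Rabs_pos_eq in Hle by lra.
    unfold c in Hle. apply (Rmult_le_compat_l (vnorm d v)) in Hle; [| lra].
    rewrite <- Rmult_assoc, Rinv_r in Hle; lra.
  - pose proof (vnorm_mvec_frob d A v). pose proof (vnorm_nonneg d (mvec d A v)).
    rewrite <- Hv in *. lra.
Qed.

Lemma opnorm_dim0 A : opnorm 0 A = 0.
Proof.
  destruct (opnorm_lub 0 A) as [_ Hleast]. pose proof (opnorm_nonneg 0 A).
  enough (opnorm 0 A <= 0) by lra.
  apply Hleast. intros r [v [_ ->]]. unfold vnorm; simpl. rewrite sqrt_0. lra.
Qed.

(** * Extreme eigenvalues of symmetric matrices *)

Module Determinant.
Import ssreflect ssrfun ssrbool eqtype ssrnat fintype bigop ssralg matrix Rstruct.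
Import GRing.Theory.
Local Open Scope ring_scope.

Lemma rsum_big d (f : nat -> R) : rsum d f = \sum_(k < d) f k.
Proof.
elim: d => [|d IH] /=; first by rewrite big_ord0.
by rewrite big_ord_recr /= IH.
Qed.

Lemma singular_or_left_invertible d (A : Mat) :
  (exists v : Vec, (exists i, lt i d /\ v i <> R0) /\ forall i, lt i d -> mvec d A v i = R0)
  \/ (exists B : Mat, forall i j, lt i d -> lt j d -> mmul d B A i j = idm i j).
Proof.
pose Am : 'M[R]_d := \matrix_(i, j) A j i.
case: (boolP (\det Am == 0)) => [/det0P [v nz vA] | ndet].
  left.
  exists (fun k => match ltnP k d with LtnNotGeq h => v ord0 (Ordinal h) | _ => R0 end).
  split.
    have [j vj] : exists j, v ord0 j != R0.
      apply/existsP; move: nz; apply: contraR; rewrite negb_exists => /forallP H.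
      apply/eqP/matrixP => i j; rewrite ord1 mxE; exact/eqP/negbNE/H.
    exists j; split; first by apply/ltP.
    case: ltnP => h; last by rewrite leqNgt ltn_ord in h.
    by move/eqP: vj; rewrite (_ : Ordinal h = j) //; apply: val_inj.
  move=> i /ltP hi; rewrite /mvec rsum_big.
  have := congr1 (fun M : 'rV[R]_d => M ord0 (Ordinal hi)) vA; rewrite !mxE => E.
  transitivity (\sum_j v ord0 j * Am j (Ordinal hi)); last exact: E.
  apply eq_bigr => k _; rewrite mxE mulrC; congr (_ * _).
  case: ltnP => h; last by rewrite leqNgt ltn_ord in h.
  by rewrite (_ : Ordinal h = k) //; apply: val_inj.
right.
have U : Am \in unitmx by rewrite unitmxE unitfE.
pose Inv := invmx Am.
exists (fun i j => match ltnP i d, ltnP j d with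
   | LtnNotGeq hi, LtnNotGeq hj => Inv (Ordinal hj) (Ordinal hi) | _, _ => R0 end).
move=> i j /ltP hi /ltP hj.
have E := congr1 (fun M : 'M[R]_d => M (Ordinal hj) (Ordinal hi)) (mulmxV U).
rewrite /= !mxE in E.
rewrite /mmul rsum_big /idm.
have -> : Nat.eqb i j = (Ordinal hj == Ordinal hi).
  apply/idP/idP.
    by move/PeanoNat.Nat.eqb_eq => e; apply/eqP/val_inj => /=.
  by move/eqP/(congr1 val) => /= ->; apply/PeanoNat.Nat.eqb_eq.
transitivity (\sum_k Am (Ordinal hj) k * invmx Am k (Ordinal hi)); last by rewrite E; case: (_ == _).
apply eq_bigr => k _; rewrite mxE mulrC.
case: ltnP => h1; last by rewrite leqNgt hi in h1.
case: ltnP => h2; last by rewrite leqNgt ltn_ord in h2.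
rewrite (_ : Ordinal h1 = Ordinal hi); last exact: val_inj.
by rewrite (_ : Ordinal h2 = k) //; apply: val_inj.
Qed.
End Determinant.

Definition quad (d : nat) (S : Mat) (v : Vec) : R := dot d v (mvec d S v).
Definition symm (d : nat) (S : Mat) : Prop :=
  forall i j, (i < d)%nat -> (j < d)%nat -> S i j = S j i.

Lemma dot_mvec_symm d S v w : symm d S -> dot d v (mvec d S w) = dot d (mvec d S v) w.
Proof.
  intros HS. rewrite <- dot_mvec_mtr. apply dot_ext; auto.
  intros. apply mvec_ext_mat. intros; unfold mtr; now apply HS.
Qed.

Lemma quad_scal d S c v : quad d S (fun i => c * v i) = c ^ 2 * quad d S v.
Proof.
  unfold quad, dot. rewrite <- rsum_scal_l. apply rsum_ext; intros.
  rewrite mvec_scal. ring.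
Qed.

Lemma quad_eigen d S l v :
  (forall i, (i < d)%nat -> mvec d S v i = l * v i) -> quad d S v = l * nsq d v.
Proof.
  intros H. unfold quad. rewrite nsq_dot. unfold dot. rewrite <- rsum_scal_l.
  apply rsum_ext. intros. rewrite H; auto; ring.
Qed.

Section PositiveSemidefinite.
Variables (d : nat) (A : Mat).
Hypothesis (HA : symm d A) (Hpsd : forall v, 0 <= quad d A v).

Lemma psd_cauchy_schwarz x y : dot d x (mvec d A y) ^ 2 <= quad d A x * quad d A y.
Proof.
  apply discriminant_le; [apply Hpsd |]. intros t.
  replace (quad d A x - 2 * t * dot d x (mvec d A y) + t ^ 2 * quad d A y)
    with (quad d A (fun k => x k - t * y k)); [apply Hpsd |].
  unfold quad.
  rewrite (dot_ext _ _ (fun k => x k - t * y k) _ (fun i => mvec d A x i - t * mvec d A y i))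
    by (auto; intros; apply mvec_sub_scal).
  rewrite dot_expand, (dot_mvec_symm d A y x HA), (dot_sym d (mvec d A y) x). ring.
Qed.

Lemma psd_nsq_mvec_le v : nsq d (mvec d A v) <= sqrt (frob2 d A) * quad d A v.
Proof.
  set (z := mvec d A v).
  assert (Hvz : dot d v (mvec d A z) = nsq d z)
    by (rewrite (dot_mvec_symm d A v z HA), nsq_dot; reflexivity).
  assert (Hz : quad d A z <= sqrt (frob2 d A) * nsq d z).
  { unfold quad. eapply Rle_trans; [apply Rle_abs |].
    eapply Rle_trans; [apply dot_abs_le |].
    pose proof (vnorm_mvec_frob d A z). pose proof (vnorm_nonneg d z).
    rewrite <- (vnorm_sqr d z). nra. }
  pose proof (psd_cauchy_schwarz v z) as Hcs. rewrite Hvz in Hcs.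
  pose proof (sqrt_pos (frob2 d A)) as Hs. pose proof (Hpsd v) as Hv.
  destruct (nsq_nonneg d z) as [Hpos | Hzero].
  - apply (Rmult_le_reg_r (nsq d z)); nra.
  - rewrite <- Hzero. nra.
Qed.

End PositiveSemidefinite.

Lemma left_inverse_nsq_le d A B :
  (forall i j, (i < d)%nat -> (j < d)%nat -> mmul d B A i j = idm i j) ->
  forall v, nsq d v <= frob2 d B * nsq d (mvec d A v).
Proof.
  intros HB v. eapply Rle_trans; [| apply nsq_mvec_le].
  right. apply rsum_ext. intros i Hi.
  rewrite <- mvec_mmul, (mvec_ext_mat d (mmul d B A) idm) by auto.
  now rewrite mvec_idm.
Qed.

Definition e0 : Vec := fun i => if Nat.eqb i 0 then 1 else 0.

Lemma nsq_e0 d : (1 <= d)%nat -> nsq d e0 = 1.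
Proof.
  intros H. destruct d; [lia |]. unfold nsq. rewrite rsum_shift.
  rewrite (rsum_ext _ _ (fun _ => 0)), rsum_0 by (intros; unfold e0; simpl; ring).
  unfold e0. simpl. ring.
Qed.

Lemma rayleigh_inf d S : (1 <= d)%nat ->
  exists m, (forall v, m * nsq d v <= quad d S v) /\
            (forall eps, 0 < eps -> exists v, nsq d v = 1 /\ quad d S v < m + eps).
Proof.
  intros Hd.
  set (Q := fun r => exists v, nsq d v = 1 /\ r = - quad d S v).
  assert (Hlub : {L | is_lub Q L}).
  { apply completeness.
    - exists (sqrt (frob2 d S)). intros r [v [Hv ->]].
      assert (Hv1 : vnorm d v = 1) by (unfold vnorm; fold (nsq d v); rewrite Hv; apply sqrt_1).
      pose proof (dot_abs_le d v (mvec d S v)). pose proof (vnorm_mvec_frob d S v).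
      pose proof (Rle_abs (- dot d v (mvec d S v))). rewrite Rabs_Ropp in *.
      unfold quad. rewrite Hv1 in *. lra.
    - exists (- quad d S e0), e0. split; [now apply nsq_e0 | reflexivity]. }
  destruct Hlub as [L [Hub Hleast]]. exists (- L). split.
  - intros v. destruct (nsq_nonneg d v) as [Hp | H0].
    + set (c := / sqrt (nsq d v)).
      assert (Hc : c ^ 2 * nsq d v = 1).
      { unfold c. rewrite <- (sqrt_sqrt (nsq d v)) at 2 by lra.
        field. apply Rgt_not_eq, sqrt_lt_R0; lra. }
      assert (- quad d S (fun i => c * v i) <= L)
        by (apply Hub; exists (fun i => c * v i); rewrite nsq_scal; auto).
      rewrite quad_scal in H. pose proof (pow2_ge_0 c).
      apply (Rmult_le_reg_l (c ^ 2)); [nra |].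
      replace (c ^ 2 * (- L * nsq d v)) with (- L * (c ^ 2 * nsq d v)) by ring.
      rewrite Hc. lra.
    + rewrite <- H0. unfold quad, dot.
      rewrite (rsum_ext _ _ (fun _ => 0)), rsum_0; [lra |].
      intros. rewrite (nsq_eq0 d v) by auto. ring.
  - intros eps He. apply Classical_Prop.NNPP. intros Hn.
    enough (L <= L - eps) by lra.
    apply Hleast. intros r [v [Hv ->]].
    destruct (Rlt_dec (quad d S v) (- L + eps)); [exfalso; eauto | lra].
Qed.

(** [lambda_min] is defined by choice, so we must show that a smallest eigenvalue
    exists: the infimum [m] of the Rayleigh quotient is one, for otherwise the
    positive semidefinite [S - m I] would be left invertible, hence coercive,
    contradicting [inf quad (S - m I) = 0] on the unit sphere. *)
Lemma rayleigh_min_eigenvalue d S : (1 <= d)%nat -> symm d S ->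
  exists m, is_eigenvalue d S m /\ forall v, m * nsq d v <= quad d S v.
Proof.
  intros Hd HS. destruct (rayleigh_inf d S Hd) as [m [Hlow Happrox]].
  exists m. split; [| exact Hlow].
  set (A := madd S (mscale (- m) idm)).
  assert (HAv : forall v i, (i < d)%nat -> mvec d A v i = mvec d S v i - m * v i)
    by (intros; unfold A; rewrite mvec_madd, mvec_mscale, mvec_idm by auto; ring).
  assert (HquadA : forall v, quad d A v = quad d S v - m * nsq d v).
  { intros v. unfold quad. rewrite (dot_ext d v v _ (fun i => 1 * mvec d S v i + (- m) * v i))
      by (auto; intros; rewrite HAv by auto; ring).
    rewrite dot_lin_r, nsq_dot. ring. }
  assert (HAsym : symm d A).
  { intros i j Hi Hj. unfold A, madd, mscale, idm. rewrite HS, Nat.eqb_sym by auto. reflexivity. }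
  assert (HApsd : forall v, 0 <= quad d A v) by (intros; rewrite HquadA; specialize (Hlow v); lra).
  destruct (Determinant.singular_or_left_invertible d A) as [[v [Hv Hker]] | [B HB]].
  - exists v. split; auto. intros i Hi. specialize (Hker i Hi). rewrite HAv in Hker; auto. lra.
  - exfalso.
    set (C := frob2 d B * sqrt (frob2 d A)).
    assert (HC : 0 <= C) by (apply Rmult_le_pos; [apply frob2_nonneg | apply sqrt_pos]).
    assert (Hcoer : forall v, nsq d v <= C * quad d A v).
    { intros v. eapply Rle_trans; [apply (left_inverse_nsq_le d A B HB) |].
      unfold C. rewrite Rmult_assoc. apply Rmult_le_compat_l; [apply frob2_nonneg |].
      now apply psd_nsq_mvec_le. }
    destruct (Happrox (/ (C + 1))) as [v [Hv Hq]]; [apply Rinv_0_lt_compat; lra |].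
    specialize (Hcoer v). rewrite HquadA, Hv in Hcoer.
    assert (C * (quad d S v - m * 1) <= C * / (C + 1)) by (apply Rmult_le_compat_l; lra).
    assert (C * / (C + 1) < 1).
    { apply (Rmult_lt_reg_r (C + 1)); [lra |]. rewrite Rmult_assoc, Rinv_l; lra. }
    lra.
Qed.

Lemma lambda_min_spec d S : (1 <= d)%nat -> symm d S ->
  is_eigenvalue d S (lambda_min d S) /\ forall v, lambda_min d S * nsq d v <= quad d S v.
Proof.
  intros Hd HS. destruct (rayleigh_min_eigenvalue d S Hd HS) as [m [Hm Hq]].
  assert (Hmin : is_eigenvalue d S m /\ forall m', is_eigenvalue d S m' -> m <= m').
  { split; auto. intros m' [w [Hw Hew]].
    pose proof (quad_eigen d S m' w Hew). pose proof (Hq w). pose proof (nsq_pos d w Hw).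
    apply (Rmult_le_reg_r (nsq d w)); lra. }
  destruct (epsilon_spec (inhabits 0)
    (fun l => is_eigenvalue d S l /\ forall m', is_eigenvalue d S m' -> l <= m')
    (ex_intro _ m Hmin)) as [Heig Hle].
  fold (lambda_min d S) in Heig, Hle.
  split; auto. intros v. specialize (Hle m Hm).
  pose proof (nsq_nonneg d v). pose proof (Hq v). nra.
Qed.

Lemma lambda_max_spec d S : (1 <= d)%nat -> symm d S ->
  forall v, quad d S v <= lambda_max d S * nsq d v.
Proof.
  intros Hd HS. set (S' := mscale (-1) S).
  assert (HS' : symm d S') by (intros i j Hi Hj; unfold S', mscale; now rewrite HS).
  assert (Hq' : forall v, quad d S' v = - quad d S v).
  { intros v. unfold quad. rewrite (dot_ext d v v _ (fun i => (-1) * mvec d S v i + 0 * v i))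
      by (auto; intros; unfold S'; rewrite mvec_mscale; ring).
    rewrite dot_lin_r. ring. }
  destruct (rayleigh_min_eigenvalue d S' Hd HS') as [m [[w [Hw Hew]] Hq]].
  assert (Hmax : is_eigenvalue d S (- m) /\ forall m', is_eigenvalue d S m' -> m' <= - m).
  { split.
    - exists w. split; auto. intros i Hi. specialize (Hew i Hi).
      unfold S' in Hew. rewrite mvec_mscale in Hew. lra.
    - intros m' [x [Hx Hex]]. pose proof (quad_eigen d S m' x Hex). pose proof (Hq x).
      pose proof (nsq_pos d x Hx). rewrite Hq' in H0.
      apply (Rmult_le_reg_r (nsq d x)); lra. }
  destruct (epsilon_spec (inhabits 0)
    (fun l => is_eigenvalue d S l /\ forall m', is_eigenvalue d S m' -> m' <= l)
    (ex_intro _ (- m) Hmax)) as [Heig Hle].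
  fold (lambda_max d S) in Heig, Hle.
  intros v. specialize (Hle (- m) (proj1 Hmax)).
  pose proof (nsq_nonneg d v). pose proof (Hq v). rewrite Hq' in H0. nra.
Qed.

(** * Step sizes *)

Lemma exp_le_compat x y : x <= y -> exp x <= exp y.
Proof. intros [H | ->]; [left; now apply exp_increasing | lra]. Qed.

Lemma exp_sqr x : exp x ^ 2 = exp (2 * x).
Proof. replace (2 * x) with (x + x) by ring. rewrite exp_plus. ring. Qed.

Lemma ln_succ_INR_nonneg n : 0 <= ln (INR n + 1).
Proof.
  rewrite <- ln_1. destruct (pos_INR n) as [H | H].
  - left. apply ln_increasing; lra.
  - rewrite <- H. right. f_equal. ring.
Qed.

Lemma step_pos a n : 0 < step a n.
Proof. apply exp_pos. Qed.

Lemma step_le_1 a n : 0 <= a -> step a n <= 1.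
Proof.
  intros Ha. rewrite <- exp_0. apply exp_le_compat.
  pose proof (ln_succ_INR_nonneg n). nra.
Qed.

Lemma step_ge_inv a n : a <= 1 -> / (INR n + 1) <= step a n.
Proof.
  intros Ha. pose proof (pos_INR n). pose proof (ln_succ_INR_nonneg n).
  unfold step, Rpower. rewrite <- (exp_ln (INR n + 1)) at 1 by lra.
  rewrite <- exp_Ropp. apply exp_le_compat. nra.
Qed.

Lemma step_ratio a b n : step a n / step b n = exp (- (a - b) * ln (INR n + 1)).
Proof. unfold step, Rpower, Rdiv. rewrite <- exp_Ropp, <- exp_plus. f_equal. ring. Qed.

Lemma exp_mul_le_convex g L : 0 <= g <= 1 -> 0 <= L -> exp (g * L) <= 1 - g + g * exp L.
Proof.
  intros Hg HL. set (u := exp (g * L)).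
  assert (Hu : 0 < u) by apply exp_pos.
  assert (H1 : u * (1 + (1 - g) * L) <= exp L).
  { replace L with (g * L + (1 - g) * L) at 2 by ring. rewrite exp_plus; fold u.
    apply Rmult_le_compat_l; [lra | apply exp_ineq1_le]. }
  assert (H2 : u * (1 - g * L) <= 1).
  { replace 1 with (u * exp (- (g * L))) at 2
      by (unfold u; rewrite <- exp_plus, Rplus_opp_r; apply exp_0).
    apply Rmult_le_compat_l; [lra |]. pose proof (exp_ineq1_le (- (g * L))). lra. }
  assert (g * (u * (1 + (1 - g) * L)) <= g * exp L) by (apply Rmult_le_compat_l; lra).
  assert (0 <= (1 - g) * (1 - u + g * u * L)) by (apply Rmult_le_pos; nra).
  nra.
Qed.

Lemma step_ratio_decrement a b k : 0 < b -> b < a -> a < 1 -> (1 <= k)%nat ->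
  0 <= step a (k - 1) / step b (k - 1) - step a k / step b k <=
       2 * (a - b) * step a k * (step a k / step b k).
Proof.
  intros Hb Hab Ha Hk. rewrite !step_ratio.
  replace (INR (k - 1) + 1) with (INR k) by (rewrite minus_INR by lia; simpl; ring).
  assert (Hk1 : 1 <= INR k) by (apply (le_INR 1); lia).
  set (L := ln (INR k + 1) - ln (INR k)).
  assert (HeL : exp L = (INR k + 1) / INR k).
  { unfold L, Rminus. rewrite exp_plus, exp_Ropp, !exp_ln by lra. reflexivity. }
  assert (HL : 0 <= L).
  { unfold L. enough (ln (INR k) < ln (INR k + 1)) by lra. apply ln_increasing; lra. }
  set (r := exp (- (a - b) * ln (INR k + 1))).
  assert (Hr : 0 < r) by apply exp_pos.
  replace (exp (- (a - b) * ln (INR k))) with (r * exp ((a - b) * L))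
    by (unfold r, L; rewrite <- exp_plus; f_equal; ring).
  pose proof (exp_mul_le_convex (a - b) L ltac:(lra) HL) as Hconv.
  rewrite HeL in Hconv.
  assert (1 <= exp ((a - b) * L)) by (rewrite <- exp_0; apply exp_le_compat; nra).
  assert (Hgap : exp ((a - b) * L) - 1 <= 2 * (a - b) * step a k).
  { pose proof (step_ge_inv a k ltac:(lra)).
    assert ((a - b) / INR k <= 2 * (a - b) * / (INR k + 1)).
    { apply (Rmult_le_reg_r (INR k * (INR k + 1))); [nra |].
      field_simplify; [| lra | lra]. nra. }
    replace (1 - (a - b) + (a - b) * ((INR k + 1) / INR k)) with (1 + (a - b) / INR k)
      in Hconv by (field; lra).
    assert (2 * (a - b) * / (INR k + 1) <= 2 * (a - b) * step a k)
      by (apply Rmult_le_compat_l; lra).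
    lra. }
  split; [nra |].
  replace (r * exp ((a - b) * L) - r) with (r * (exp ((a - b) * L) - 1)) by ring.
  rewrite (Rmult_comm _ r). apply Rmult_le_compat_l; lra.
Qed.

Lemma ceil_nat_ge x : x <= INR (ceil_nat x).
Proof.
  unfold ceil_nat. destruct (archimed (- x)) as [H1 H2].
  set (z := (1 - up (- x))%Z).
  assert (Hz : x <= IZR z) by (unfold z; rewrite minus_IZR; simpl; lra).
  destruct (Z.lt_ge_cases z 0).
  - pose proof (pos_INR (Z.to_nat z)). assert (IZR z < 0) by (now apply IZR_lt). lra.
  - rewrite INR_IZR_INZ, Znat.Z2Nat.id by lia. exact Hz.
Qed.

Lemma step_mul_le_of_ceil a c L j : 0 < a -> 0 < c -> 0 <= L ->
  (ceil_nat (Rpower (L / c) (1 / a)) <= j)%nat -> step a j * L <= c.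
Proof.
  intros Ha Hc HL Hj. destruct HL as [HL | <-]; [| lra].
  set (x := L / c) in Hj.
  assert (Hx : 0 < x) by (unfold x; apply Rdiv_lt_0_compat; lra).
  pose proof (ceil_nat_ge (Rpower x (1 / a))). apply le_INR in Hj.
  assert (Hlt : Rpower x (1 / a) < INR j + 1) by lra.
  unfold Rpower in Hlt. apply ln_increasing in Hlt; [| apply exp_pos].
  rewrite ln_exp in Hlt.
  assert (ln x < a * ln (INR j + 1)).
  { apply (Rmult_lt_compat_l a) in Hlt; auto.
    replace (a * (1 / a * ln x)) with (ln x) in Hlt by (field; lra). exact Hlt. }
  assert (Hs : step a j < / x).
  { unfold step, Rpower. rewrite <- (exp_ln x), <- exp_Ropp by exact Hx.
    apply exp_increasing. lra. }
  unfold x in Hs. rewrite Rinv_div in Hs.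
  apply (Rmult_lt_compat_r L) in Hs; [| lra].
  replace (c / L * L) with c in Hs by (field; lra). lra.
Qed.

Section Contraction.
Variables (d : nat) (X : Mat).

Lemma quad_sym_part v : quad d (madd X (mtr X)) v = 2 * dot d v (mvec d X v).
Proof.
  unfold quad.
  rewrite (dot_ext d v v _ (fun i => 1 * mvec d X v i + 1 * mvec d (mtr X) v i))
    by (auto; intros; rewrite mvec_madd; ring).
  rewrite dot_lin_r, dot_mvec_mtr, dot_sym. ring.
Qed.

Lemma quad_gram v : quad d (mmul d (mtr X) X) v = nsq d (mvec d X v).
Proof.
  unfold quad. rewrite (dot_ext d v v _ (mvec d (mtr X) (mvec d X v))) by (auto; intros; apply mvec_mmul).
  now rewrite dot_mvec_mtr, nsq_dot.
Qed.

Lemma symm_sym_part : symm d (madd X (mtr X)).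
Proof. intros i j _ _. unfold madd, mtr. ring. Qed.

Lemma symm_gram : symm d (mmul d (mtr X) X).
Proof. intros i j _ _. unfold mmul, mtr. apply rsum_ext; intros; ring. Qed.

Lemma nsq_id_sub_scale_le a v : 0 <= a -> (1 <= d)%nat ->
  nsq d (mvec d (madd idm (mscale (- a) X)) v) <=
  (1 - a * lambda_min d (madd X (mtr X)) + a ^ 2 * lambda_max d (mmul d (mtr X) X)) * nsq d v.
Proof.
  intros Ha Hd.
  assert (E : nsq d (mvec d (madd idm (mscale (- a) X)) v)
              = nsq d v - a * quad d (madd X (mtr X)) v + a ^ 2 * quad d (mmul d (mtr X) X) v).
  { rewrite quad_sym_part, quad_gram, !nsq_dot.
    rewrite (dot_ext d _ (fun i => v i - a * mvec d X v i) _ (fun i => v i - a * mvec d X v i))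
      by (intros; rewrite mvec_madd, mvec_mscale, mvec_idm by auto; ring).
    rewrite dot_expand, (dot_sym d (mvec d X v) v). ring. }
  rewrite E.
  pose proof (proj2 (lambda_min_spec d _ Hd symm_sym_part) v).
  pose proof (lambda_max_spec d _ Hd symm_gram v).
  pose proof (pow2_ge_0 a).
  assert (a * (lambda_min d (madd X (mtr X)) * nsq d v) <= a * quad d (madd X (mtr X)) v)
    by (apply Rmult_le_compat_l; auto).
  assert (a ^ 2 * quad d (mmul d (mtr X) X) v <=
          a ^ 2 * (lambda_max d (mmul d (mtr X) X) * nsq d v))
    by (apply Rmult_le_compat_l; auto).
  nra.
Qed.

End Contraction.

(** * Products of contractions and tail sums *)

Lemma mprod_vnorm_le d (F : nat -> Mat) (c : nat -> R) :
  (forall j v, vnorm d (mvec d (F j) v) <= c j * vnorm d v) -> (forall j, 0 <= c j) ->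
  forall m a v, vnorm d (mvec d (mprod d F a m) v) <= rprod m (fun t => c (a + t)%nat) * vnorm d v.
Proof.
  intros HF Hc. induction m; intros a v; simpl.
  - rewrite (vnorm_ext d _ v) by (intros; now apply mvec_idm). lra.
  - rewrite (vnorm_ext d _ (mvec d (mprod d F a m) (mvec d (F (a + m)%nat) v)))
      by (intros; apply mvec_mmul).
    eapply Rle_trans; [apply IHm |].
    rewrite Rmult_assoc. apply Rmult_le_compat_l; [now apply rprod_nonneg | apply HF].
Qed.

Lemma max_l1_ge l1 l2 F m : (l1 <= m)%nat -> F l1 l2 <= max_l1 l2 F m.
Proof.
  induction m; intros H; simpl.
  - replace l1 with O by lia. lra.
  - destruct (Nat.eq_dec l1 (S m)) as [-> |]; [apply Rmax_r |].
    eapply Rle_trans; [apply IHm; lia | apply Rmax_l].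
Qed.

Lemma max_tri_ge l1 l2 F K : (l1 <= l2)%nat -> (l2 <= K)%nat -> F l1 l2 <= max_tri K F.
Proof.
  intros H1. induction K; intros H2; simpl.
  - replace l2 with O in * by lia. replace l1 with O by lia. lra.
  - destruct (Nat.eq_dec l2 (S K)) as [-> |].
    + eapply Rle_trans; [apply max_l1_ge; eauto | apply Rmax_r].
    + eapply Rle_trans; [apply IHK; lia | apply Rmax_l].
Qed.

(** The sum runs over a window of indices in [[a, K)]; its exponential is the
    square root of one of the products maximized in [C_theta]. *)
Lemma exp_half_window_sum_le (g : nat -> R) K N a :
  exp (rsum N (fun t => if Nat.ltb (a + t) K then g (a + t)%nat / 2 else 0))
  <= Rmax 1 (sqrt (max_tri K (fun l1 l2 => rprod_range l1 l2 (fun l => exp (g l))))).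
Proof.
  rewrite (rsum_truncate N a K (fun j => g j / 2)).
  destruct (Nat.min N (K - a)) as [| m] eqn:Em.
  - simpl. rewrite exp_0. apply Rmax_l.
  - eapply Rle_trans; [| apply Rmax_r].
    set (s := rsum (S m) (fun t => g (a + t)%nat)).
    assert (Hwin : exp s <= max_tri K (fun l1 l2 => rprod_range l1 l2 (fun l => exp (g l)))).
    { pose proof (max_tri_ge a (a + m) (fun l1 l2 => rprod_range l1 l2 (fun l => exp (g l))) K
                    ltac:(lia) ltac:(lia)) as H.
      unfold rprod_range in H. replace (S (a + m) - a)%nat with (S m) in H by lia.
      now rewrite rprod_exp in H. }
    replace (rsum (S m) (fun t => g (a + t)%nat / 2)) with (s / 2)
      by (unfold s, Rdiv; now rewrite rsum_scal_r).
    replace (exp (s / 2)) with (sqrt (exp s)).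
    + now apply sqrt_le_1_alt.
    + replace s with (s / 2 + s / 2) at 1 by field.
      rewrite exp_plus. apply sqrt_square. left; apply exp_pos.
Qed.

Definition tail_sum (a : nat -> R) (n k : nat) : R := rsum (n - k) (fun t => a (S k + t)%nat).

Lemma tail_sum_diag a n : tail_sum a n n = 0.
Proof. unfold tail_sum. now rewrite Nat.sub_diag. Qed.

Lemma tail_sum_pred a n k : (k < n)%nat -> tail_sum a n k = a (S k) + tail_sum a n (S k).
Proof.
  intros H. unfold tail_sum. replace (n - k)%nat with (S (n - S k)) by lia.
  rewrite rsum_shift, Nat.add_0_r. f_equal. apply rsum_ext. intros; f_equal; lia.
Qed.

Lemma tail_chain (x e : nat -> R) (c : R) n0 n :
  (forall k, (n0 <= k)%nat -> x k <= x (S k) * exp (c * e (S k))) ->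
  forall k, (n0 <= k <= n)%nat -> x k <= x n * exp (c * tail_sum e n k).
Proof.
  intros H k Hk. remember (n - k)%nat as p eqn:Hp.
  revert k Hk Hp. induction p; intros k Hk Hp.
  - replace k with n by lia. rewrite tail_sum_diag, Rmult_0_r, exp_0. lra.
  - rewrite tail_sum_pred, Rmult_plus_distr_l, exp_plus by lia.
    eapply Rle_trans; [apply H; lia |].
    rewrite (Rmult_comm (exp _)), <- Rmult_assoc.
    apply Rmult_le_compat_r; [left; apply exp_pos | apply IHp; lia].
Qed.

Lemma mul_exp_neg_le_one_sub c x : 0 < c -> 0 <= x <= 1 ->
  c * x * exp (- c) <= 1 - exp (- (c * x)).
Proof.
  intros Hc Hx.
  assert (E : exp (c * x) * exp (- (c * x)) = 1)
    by (rewrite <- exp_plus, Rplus_opp_r; apply exp_0).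
  assert (exp (- c) <= exp (- (c * x))) by (apply exp_le_compat; nra).
  pose proof (exp_pos (- (c * x))). pose proof (exp_ineq1_le (c * x)).
  assert ((1 + c * x) * exp (- (c * x)) <= 1) by (rewrite <- E; apply Rmult_le_compat_r; lra).
  assert (c * x * exp (- c) <= c * x * exp (- (c * x))) by (apply Rmult_le_compat_l; nra).
  nra.
Qed.

(** A Riemann sum of [t |-> exp (- c t)] with mesh at most [1]. *)
Lemma sum_exp_tail_le (a : nat -> R) c n0 n :
  0 < c -> (forall k, 0 <= a k <= 1) ->
  rsum (n - n0) (fun t => a (S (n0 + t)) * exp (- c * tail_sum a n (S (n0 + t))))
  <= exp c / c.
Proof.
  intros Hc Ha.
  set (E := fun j => exp (- c * tail_sum a n j)).
  assert (Hce : 0 < exp c / c) by (apply Rdiv_lt_0_compat; [apply exp_pos | lra]).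
  eapply Rle_trans.
  - apply (rsum_le_compat _ _ (fun t => exp c / c * (E (S (n0 + t)) - E (n0 + t)%nat))).
    intros t Ht. unfold E. rewrite (tail_sum_pred a n (n0 + t)) by lia.
    set (x := a (S (n0 + t))). set (T := tail_sum a n (S (n0 + t))).
    pose proof (mul_exp_neg_le_one_sub c x Hc (Ha _)) as Hx.
    assert (Hw : 0 <= exp c * exp (- c * T) / c).
    { apply Rmult_le_pos; [| left; now apply Rinv_0_lt_compat].
      apply Rmult_le_pos; left; apply exp_pos. }
    apply (Rmult_le_compat_l _ _ _ Hw) in Hx.
    replace (exp c * exp (- c * T) / c * (c * x * exp (- c)))
      with (x * exp (- c * T) * (exp c * exp (- c))) in Hx by (field; lra).
    rewrite <- exp_plus, Rplus_opp_r, exp_0, Rmult_1_r in Hx.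
    replace (exp (- c * (x + T))) with (exp (- c * T) * exp (- (c * x)))
      by (rewrite <- exp_plus; f_equal; ring).
    replace (exp c / c * (exp (- c * T) - exp (- c * T) * exp (- (c * x))))
      with (exp c * exp (- c * T) / c * (1 - exp (- (c * x)))) by (field; lra).
    exact Hx.
  - rewrite rsum_scal_l, rsum_telescope. unfold E.
    destruct (Nat.le_gt_cases n0 n).
    + replace (n0 + (n - n0))%nat with n by lia.
      rewrite tail_sum_diag, Rmult_0_r, exp_0.
      pose proof (exp_pos (- c * tail_sum a n n0)).
      assert (exp c / c * (1 - exp (- c * tail_sum a n n0)) <= exp c / c * 1)
        by (apply Rmult_le_compat_l; lra). lra.
    + replace (n - n0)%nat with O by lia. rewrite Nat.add_0_r, Rminus_diag, Rmult_0_r. lra.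
Qed.

(** * The bound on [T_(n+1)] *)

Lemma alpha_moderate_chain alpha beta q u n0 n :
  (forall k, 0 < u k) -> alpha_moderate alpha beta q u n0 ->
  forall k, (n0 <= k <= n)%nat ->
  u k * (step alpha k / step beta k)
  <= u n * (step alpha n / step beta n) * exp (q / 2 * tail_sum (step alpha) n k).
Proof.
  intros Hu Hmod. apply (tail_chain (fun k => u k * (step alpha k / step beta k))).
  intros k Hk. specialize (Hmod k Hk).
  pose proof (Hu k). pose proof (Hu (S k)).
  pose proof (step_pos alpha k). pose proof (step_pos alpha (S k)).
  pose proof (step_pos beta k). pose proof (step_pos beta (S k)).
  assert (Hw : 0 < u (S k) * (step alpha k / step beta k)) by (apply Rmult_lt_0_compat; [lra | now apply Rdiv_lt_0_compat]).
  apply (Rmult_le_compat_r _ _ _ (Rlt_le _ _ Hw)) in Hmod.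
  replace (u k / u (S k) * (u (S k) * (step alpha k / step beta k)))
    with (u k * (step alpha k / step beta k)) in Hmod by (field; lra).
  eapply Rle_trans; [exact Hmod |]. right. field. lra.
Qed.

Section Bound.
Variables (d : nat) (alpha beta : R) (X1 : Mat).
Hypotheses (Hbeta : 0 < beta) (Hab : beta < alpha) (Ha1 : alpha < 1).
Hypotheses (HX1 : pos_def d (madd X1 (mtr X1))) (Hd : (1 <= d)%nat).

Local Notation q := (q1 d X1).
Local Notation lam := (lambda_min d (madd X1 (mtr X1))).
Local Notation Lam := (lambda_max d (mmul d (mtr X1) X1)).

Lemma C_theta_ge_1 : 1 <= C_theta d alpha X1.
Proof. apply Rmax_l. Qed.

Lemma C_U_nonneg : 0 <= C_U d alpha beta X1.
Proof. unfold C_U. pose proof (opnorm_nonneg d X1). nra. Qed.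

Lemma q1_pos : 0 < q.
Proof.
  destruct (lambda_min_spec d _ Hd (symm_sym_part d X1)) as [[v [Hv Hev]] _].
  pose proof (quad_eigen d _ _ v Hev) as Hq. pose proof (HX1 v Hv). pose proof (nsq_pos d v Hv).
  unfold quad, dot in Hq. unfold q1. nra.
Qed.

Lemma lambda_max_gram_nonneg : 0 <= Lam.
Proof.
  pose proof (lambda_max_spec d _ Hd (symm_gram d X1) e0) as H.
  rewrite quad_gram, nsq_e0 in H by exact Hd.
  pose proof (nsq_nonneg d (mvec d X1 e0)). lra.
Qed.

(** Before the index [Kc] the factor [I - alpha_j X1] need not contract at the rate
    [exp (- q1 alpha_j)]; [theta_excess j] is the exponent it may exceed it by. *)
Definition theta_excess (j : nat) : R :=
  if Nat.ltb j (Kc d alpha X1) then step alpha j * (mu d X1 + 2 * q1 d X1) / 2 else 0.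

Lemma Ifac_vnorm_le j v :
  vnorm d (mvec d (Ifac d alpha X1 j) v) <= exp (- q * step alpha j + theta_excess j) * vnorm d v.
Proof.
  set (a := step alpha j).
  assert (Ha : 0 < a <= 1) by (split; [apply step_pos | apply step_le_1; lra]).
  pose proof q1_pos. pose proof lambda_max_gram_nonneg.
  apply vnorm_le_of_nsq; [left; apply exp_pos |].
  eapply Rle_trans; [apply (nsq_id_sub_scale_le d X1 a v); [lra | exact Hd] |].
  apply Rmult_le_compat_r; [apply nsq_nonneg |].
  rewrite exp_sqr.
  assert (Hlam : lam = 4 * q) by (unfold q1; field).
  unfold theta_excess; fold a. destruct (Nat.ltb_spec j (Kc d alpha X1)) as [HK | HK].
  - replace (2 * (- q * a + a * (mu d X1 + 2 * q) / 2)) with (a * (- lam + Lam))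
      by (unfold mu; field).
    pose proof (exp_ineq1_le (a * (- lam + Lam))).
    assert (a ^ 2 * Lam <= a * Lam) by (apply Rmult_le_compat_r; [lra | simpl; nra]).
    nra.
  - assert (HaL : a * Lam <= 2 * q).
    { apply (step_mul_le_of_ceil alpha (2 * q) Lam j); [lra | lra | lra |].
      unfold Kc in HK. now replace (lam - 2 * q) with (2 * q) in HK by lra. }
    pose proof (exp_ineq1_le (2 * (- q * a + 0))).
    assert (a ^ 2 * Lam <= a * (2 * q)) by (simpl; nra).
    nra.
Qed.

Lemma mprod_Ifac_vnorm_le k n v :
  vnorm d (mvec d (mprod_range d (Ifac d alpha X1) (S k) n) v)
  <= exp (- q * tail_sum (step alpha) n k) * C_theta d alpha X1 * vnorm d v.
Proof.
  unfold mprod_range. eapply Rle_trans.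
  - apply (mprod_vnorm_le d _ (fun j => exp (- q * step alpha j + theta_excess j)));
      [apply Ifac_vnorm_le | intros; left; apply exp_pos].
  - rewrite rprod_exp.
    replace (rsum (S n - S k) (fun t => - q * step alpha (S k + t) + theta_excess (S k + t)))
      with (- q * tail_sum (step alpha) n k + rsum (n - k) (fun t => theta_excess (S k + t)))
      by (unfold tail_sum; simpl; rewrite rsum_plus, rsum_scal_l; reflexivity).
    rewrite exp_plus. apply Rmult_le_compat_r; [apply vnorm_nonneg |].
    apply Rmult_le_compat_l; [left; apply exp_pos |].
    exact (exp_half_window_sum_le (fun l => step alpha l * (mu d X1 + 2 * q1 d X1))
             (Kc d alpha X1) (n - k) (S k)).
Qed.

Definition bracket (k : nat) : Mat :=
  madd (mscale (step alpha k / step beta k) idm)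
       (mscale (- (step alpha (k - 1) / step beta (k - 1))) (Ifac d alpha X1 k)).

(** [bracket k = (r_k - r_(k-1)) I + r_(k-1) alpha_k X1] with [r_k = alpha_k / beta_k]. *)
Lemma bracket_vnorm_le k z : (1 <= k)%nat ->
  vnorm d (mvec d (bracket k) z)
  <= C_U d alpha beta X1 * step alpha k * (step alpha k / step beta k) * vnorm d z.
Proof.
  intros Hk.
  set (r := fun k => step alpha k / step beta k). set (a := step alpha k).
  rewrite (vnorm_ext d _ (fun i => (r k - r (k - 1)%nat) * z i + (r (k - 1)%nat * a) * mvec d X1 z i))
    by (intros; unfold bracket, Ifac; rewrite !mvec_madd, !mvec_mscale, !mvec_madd,
        !mvec_mscale, !mvec_idm by auto; unfold r, a; ring).
  eapply Rle_trans; [apply vnorm_lin |].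
  destruct (step_ratio_decrement alpha beta k Hbeta Hab Ha1 Hk) as [B1 B2].
  fold (r k) (r (k - 1)%nat) a in B1, B2.
  assert (Ha : 0 < a <= 1) by (split; [apply step_pos | apply step_le_1; lra]).
  assert (Hr : forall j, 0 < r j) by (intros; apply Rdiv_lt_0_compat; apply step_pos).
  pose proof (Hr k). pose proof (Hr (k - 1)%nat).
  rewrite Rabs_left1, Rabs_pos_eq by nra.
  pose proof (opnorm_bound d X1 z). pose proof (opnorm_nonneg d X1).
  pose proof (vnorm_nonneg d z). pose proof (vnorm_nonneg d (mvec d X1 z)).
  assert (2 * (alpha - beta) * a * r k <= 2 * (alpha - beta) * 1 * r k)
    by (apply Rmult_le_compat_r; [lra | apply Rmult_le_compat_l; lra]).
  assert (Hrk1 : r (k - 1)%nat <= r k * (1 + 2 * (alpha - beta))) by lra.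
  assert (r (k - 1)%nat * a * vnorm d (mvec d X1 z)
          <= r k * (1 + 2 * (alpha - beta)) * a * (opnorm d X1 * vnorm d z)).
  { apply Rle_trans with (r (k - 1)%nat * a * (opnorm d X1 * vnorm d z)).
    - apply Rmult_le_compat_l; [nra | assumption].
    - apply Rmult_le_compat_r; [nra |]. apply Rmult_le_compat_r; lra. }
  assert ((r (k - 1)%nat - r k) * vnorm d z <= 2 * (alpha - beta) * a * r k * vnorm d z)
    by (apply Rmult_le_compat_r; lra).
  unfold C_U. fold a. change (a / step beta k) with (r k). lra.
Qed.

Lemma T_summand_vnorm_le k n M v : (1 <= k)%nat ->
  vnorm d (mvec d (mmul d (mprod_range d (Ifac d alpha X1) (S k) n) (mmul d (bracket k) M)) v)
  <= exp (- q * tail_sum (step alpha) n k) * C_theta d alpha X1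
     * (C_U d alpha beta X1 * step alpha k * (step alpha k / step beta k))
     * opnorm d M * vnorm d v.
Proof.
  intros Hk.
  rewrite (vnorm_ext d _ (mvec d (mprod_range d (Ifac d alpha X1) (S k) n)
                            (mvec d (bracket k) (mvec d M v))))
    by (intros; rewrite mvec_mmul; apply mvec_ext; intros; apply mvec_mmul).
  eapply Rle_trans; [apply mprod_Ifac_vnorm_le |].
  pose proof (step_pos alpha k). pose proof (step_pos beta k).
  pose proof C_theta_ge_1 as HCT. pose proof C_U_nonneg as HCU.
  assert (Hr : 0 < step alpha k / step beta k) by (apply Rdiv_lt_0_compat; lra).
  set (c := C_U d alpha beta X1 * step alpha k * (step alpha k / step beta k)).
  replace (exp (- q * tail_sum (step alpha) n k) * C_theta d alpha X1 * c * opnorm d M * vnorm d v)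
    with (exp (- q * tail_sum (step alpha) n k) * C_theta d alpha X1 * (c * (opnorm d M * vnorm d v)))
    by ring.
  apply Rmult_le_compat_l; [apply Rmult_le_pos; [left; apply exp_pos | lra] |].
  eapply Rle_trans; [apply (bracket_vnorm_le k _ Hk) |].
  fold c.
  apply Rmult_le_compat_l; [| apply opnorm_bound].
  unfold c.
  apply Rmult_le_pos; [apply Rmult_le_pos |]; lra.
Qed.

Lemma T_summand_moderate_le M (u : nat -> R) (w : nat -> Vec) (wstar : Vec) n0 n k :
  (forall k, 0 < u k) -> alpha_moderate alpha beta q u n0 ->
  (forall k, (n0 <= k <= n)%nat -> vnorm d (vsub (w k) wstar) <= u k) ->
  (S n0 <= k <= n)%nat ->
  vnorm d (mvec d (mmul d (mprod_range d (Ifac d alpha X1) (S k) n) (mmul d (bracket k) M))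
                (vsub (w k) wstar))
  <= C_theta d alpha X1 * C_U d alpha beta X1 * opnorm d M * (u n * (step alpha n / step beta n))
     * (step alpha k * exp (- (q / 2) * tail_sum (step alpha) n k)).
Proof.
  intros Hu Hmod Hw Hk. eapply Rle_trans; [apply T_summand_vnorm_le; lia |].
  pose proof (alpha_moderate_chain alpha beta q u n0 n Hu Hmod k ltac:(lia)) as Hchain.
  pose proof (Hw k ltac:(lia)) as Hwk.
  pose proof (step_pos alpha k). pose proof (step_pos beta k).
  set (T := tail_sum (step alpha) n k) in *.
  set (r := step alpha k / step beta k) in *. set (a := step alpha k) in *.
  assert (Hr : 0 < r) by (apply Rdiv_lt_0_compat; lra).
  assert (HP : 0 <= C_theta d alpha X1 * C_U d alpha beta X1 * opnorm d M * a).
  { pose proof C_theta_ge_1. pose proof C_U_nonneg. pose proof (opnorm_nonneg d M).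
    repeat apply Rmult_le_pos; lra. }
  replace (exp (- q * T) * C_theta d alpha X1 * (C_U d alpha beta X1 * a * r)
           * opnorm d M * vnorm d (vsub (w k) wstar))
    with (exp (- q * T) * (C_theta d alpha X1 * C_U d alpha beta X1 * opnorm d M * a)
          * (vnorm d (vsub (w k) wstar) * r)) by ring.
  apply Rle_trans with (exp (- q * T) * (C_theta d alpha X1 * C_U d alpha beta X1 * opnorm d M * a)
                        * (u n * (step alpha n / step beta n) * exp (q / 2 * T))).
  - apply Rmult_le_compat_l; [apply Rmult_le_pos; [left; apply exp_pos | exact HP] |].
    eapply Rle_trans; [| exact Hchain]. apply Rmult_le_compat_r; lra.
  - right.
    replace (exp (- (q / 2) * T)) with (exp (- q * T) * exp (q / 2 * T))
      by (rewrite <- exp_plus; f_equal; field).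
    ring.
Qed.

Lemma T_next_vnorm_le M (u : nat -> R) (w : nat -> Vec) (wstar : Vec) n0 n :
  (forall k, 0 < u k) -> alpha_moderate alpha beta q u n0 ->
  (forall k, (n0 <= k <= n)%nat -> vnorm d (vsub (w k) wstar) <= u k) ->
  vnorm d (T_next d alpha beta X1 M w wstar n0 n)
  <= 2 * exp (q / 2) / q * C_U d alpha beta X1 * opnorm d M * C_theta d alpha X1
     * (step alpha n / step beta n) * u n.
Proof.
  intros Hu Hmod Hw.
  set (Cst := C_theta d alpha X1 * C_U d alpha beta X1 * opnorm d M
              * (u n * (step alpha n / step beta n))).
  assert (Hq := q1_pos).
  assert (HCst : 0 <= Cst).
  { pose proof (Hu n). pose proof (step_pos alpha n). pose proof (step_pos beta n).
    pose proof C_theta_ge_1. pose proof C_U_nonneg. pose proof (opnorm_nonneg d M).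
    assert (0 < step alpha n / step beta n) by (apply Rdiv_lt_0_compat; lra).
    unfold Cst. apply Rmult_le_pos; [repeat apply Rmult_le_pos |]; nra. }
  unfold T_next, rsum_range.
  eapply Rle_trans; [apply vnorm_rsum |].
  eapply Rle_trans;
    [apply rsum_le_compat; intros t Ht; apply (T_summand_moderate_le M u w wstar n0); auto; lia |].
  rewrite rsum_scal_l.
  eapply Rle_trans.
  - apply Rmult_le_compat_l; [exact HCst |].
    apply (sum_exp_tail_le (step alpha) (q / 2) n0 n); [lra |].
    intros k. split; [left; apply step_pos | apply step_le_1; lra].
  - right. unfold Cst. field. split; [apply Rgt_not_eq, step_pos | lra].
Qed.

End Bound.

Lemma vnorm_dim0 v : vnorm 0 v = 0.
Proof. apply sqrt_0. Qed.

Theorem mainTheorem11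
  (d : nat) (alpha beta : R) (X1 W1 W2 W2inv : Mat)
  (n0 n : nat) (u : nat -> R) (w : nat -> Vec) (wstar : Vec)
  (Hbeta : 0 < beta) (Hab : beta < alpha) (Ha1 : alpha < 1)
  (HX1 : pos_def d (madd X1 (mtr X1)))
  (HW2l : forall i j, (i < d)%nat -> (j < d)%nat -> mmul d W2 W2inv i j = idm i j)
  (HW2r : forall i j, (i < d)%nat -> (j < d)%nat -> mmul d W2inv W2 i j = idm i j)
  (Hn : (n0 <= n)%nat)
  (Hupos : forall k, 0 < u k)
  (Hmod : alpha_moderate alpha beta (q1 d X1) u n0)
  (Hw : forall k, (n0 <= k <= n)%nat -> vnorm d (vsub (w k) wstar) <= u k) :
  vnorm d (T_next d alpha beta X1 (mmul d W1 W2inv) w wstar n0 n)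
  <= 2 * exp (q1 d X1 / 2) / q1 d X1 * C_U d alpha beta X1
     * opnorm d (mmul d W1 W2inv) * C_theta d alpha X1
     * (step alpha n / step beta n) * u n.
Proof.
  (* Any matrix may stand for [W1 W2^-1]. *)
  destruct (Nat.eq_dec d 0) as [-> | Hd].
  - rewrite vnorm_dim0, opnorm_dim0. right. ring.
  - apply T_next_vnorm_le; auto. lia.
Qed.
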